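(* For every Hessenberg function $h$ on $\{1,\dots,n\}$, the $\mathbb{Q}$-linear extension $\Phi:M^{h,(n)}\to\operatorname{span}_{\mathbb{Q}}\mathcal{A}_h((n))$ is an isomorphism of graded vector spaces; equivalently, $\Phi$ is a degree-preserving bijection from the set of $(h,(n))$-fillings onto $\mathcal{A}_h((n))=\mathcal{B}_h$.
   Context: A Hessenberg function is $h:\{1,\dots,n\}\to\{1,\dots,n\}$, $h_i=h(i)$, with $i\le h_i$ and $h_i\le h_{i+1}$; degree tuple $\beta_i=i-\#\{k:h_k<i\}$; $\mathcal{B}_h=\{x_1^{\alpha_1}\cdots x_n^{\alpha_n}:0\le\alpha_i\le\beta_i-1\}$. An $(h,(n))$-filling is a permutation $T=w_1\cdots w_n$ of $1,\dots,n$ in one row with $w_t\le h(w_{t+1})$ for all $t$. A dimension pair of $T$ is $(a,b)$ with $b>a$, $b$ to the left of $a$, and, if $a$ is immediately followed by $c$, $b\le h(c)$. $\Phi(T)=\prod_{j=2}^n x_j^{|D^T_j|}$ with $D^T_j$ the set of dimension pairs $(a,j)$; $\mathcal{A}_h((n))$ is the set of all $\Phi(T)$. $M^{h,(n)}$ is the formal $\mathbb{Q}$-span of the $(h,(n))$-fillings, graded by number of dimension pairs; the span of monomials is graded by degree. *)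

(* Everything is 1-based: values 1..n, fillings are seq nat. *)
From mathcomp Require Import all_boot.
Set Implicit Arguments. Unset Strict Implicit. Unset Printing Implicit Defensive.

(* Hessenberg function on {1,...,n}; values of h outside {1..n} are irrelevant. *)
Definition hessenberg (n : nat) (h : nat -> nat) : Prop :=
  (forall i, 1 <= i <= n -> i <= h i <= n) /\
  (forall i, 1 <= i < n -> h i <= h i.+1).

Definition beta (n : nat) (h : nat -> nat) (i : nat) : nat :=
  i - count (fun k => h k < i) (iota 1 n).

(* Monomials x_1^{a_1}...x_n^{a_n} are represented by their exponent vectors
   [:: a_1; ...; a_n].  B_h = exponent vectors with 0 <= a_i <= beta_i - 1. *)
Definition in_Bh (n : nat) (h : nat -> nat) (a : seq nat) : bool :=
  (size a == n) && all (fun i => nth 0 a i.-1 < beta n h i) (iota 1 n).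

Definition filling (n : nat) (h : nat -> nat) (T : seq nat) : bool :=
  perm_eq T (iota 1 n) && sorted (fun x y => x <= h y) T.

Definition dim_pair (h : nat -> nat) (T : seq nat) (a b : nat) : bool :=
  [&& a \in T, b \in T, a < b, index b T < index a T &
      ((index a T).+1 < size T) ==> (b <= h (nth 0 T (index a T).+1))].

Definition Dcard (h : nat -> nat) (T : seq nat) (j : nat) : nat :=
  count (fun a => dim_pair h T a j) T.

(* total number of dimension pairs of T (grading of M^{h,(n)}) *)
Definition num_dim_pairs (h : nat -> nat) (T : seq nat) : nat :=
  sumn [seq count (fun a => dim_pair h T a b) T | b <- T].

Definition Phi (n : nat) (h : nat -> nat) (T : seq nat) : seq nat :=
  [seq (if j == 1 then 0 else Dcard h T j) | j <- iota 1 n].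

From mathcomp Require Import all_boot zify.

Set Implicit Arguments.
Unset Strict Implicit.
Unset Printing Implicit Defensive.

(* Induct on the number m of letters by inserting the largest letter m+1.
   The fillings of {1..m+1} are the words L ++ m+1 :: R where L ++ R is a
   filling of {1..m} and R is empty or starts with a letter b with
   m+1 <= h b.  The insertion leaves every D_i, i <= m, unchanged, while
   |D_{m+1}| becomes the number of letters y of R with m+1 <= h y.  For a
   fixed L ++ R the admissible suffixes R are determined by this number,
   which takes every value from 0 to #{y <= m | m+1 <= h y} = beta_{m+1} - 1;
   so the exponent of x_{m+1} runs bijectively over its range in B_h. *)

Section HeadSplit.

Variables (T : eqType) (P : pred T).

Definition head_sat (s : seq T) : bool := if s is x :: _ then P x else true.

Lemma split_count_exists s k : k <= count P s ->
  exists L R, [/\ s = L ++ R, head_sat R & count P R = k].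
Proof.
elim: s k => [|y s IH] k /=.
  by rewrite leqn0 => /eqP ->; exists [::], [::].
case: (leqP k (count P s)) => [le_ks _ | lt_sk le_kys].
  by have [L [R [-> ? ?]]] := IH k le_ks; exists (y :: L), R.
have Py : P y by case: (P y) le_kys => //; rewrite add0n leqNgt lt_sk.
exists [::], (y :: s); split => //=.
by apply/eqP; rewrite eqn_leq le_kys andbT Py add1n.
Qed.

Lemma cat_eq_cat_le (L1 L2 R1 R2 : seq T) : L1 ++ R1 = L2 ++ R2 ->
  size L1 <= size L2 -> exists X, L2 = L1 ++ X /\ R1 = X ++ R2.
Proof.
elim: L1 L2 => [|a L1 IH] L2 /=; first by move=> ->; exists L2.
case: L2 => [|b L2] //= [-> /IH E] /E [X [-> ->]].
by exists X.
Qed.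

Lemma split_count_inj L1 R1 L2 R2 : L1 ++ R1 = L2 ++ R2 ->
  head_sat R1 -> head_sat R2 -> count P R1 = count P R2 -> L1 = L2 /\ R1 = R2.
Proof.
wlog le_L12 : L1 R1 L2 R2 / size L1 <= size L2.
  move=> W; case: (leqP (size L1) (size L2)) => [|/ltnW] le_L; first exact: W.
  by move=> E H1 H2 C; have [-> ->] := W _ _ _ _ le_L (esym E) H2 H1 (esym C).
move=> E H1 _ C; have [[|x X] [-> R1E]] := cat_eq_cat_le E le_L12.
  by rewrite R1E cats0.
move: H1 C; rewrite R1E /= count_cat => ->.
by rewrite add1n -addSn -[X in _ = X]add0n => /addIn.
Qed.

End HeadSplit.

Definition hrel (h : nat -> nat) : rel nat := fun x y => x <= h y.

Section DimensionPairs.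

Variable h : nat -> nat.

(* In a word X ++ j :: R, the pairs (a, j) are counted by dims_after j R. *)
Fixpoint dims_after (j : nat) (R : seq nat) : nat :=
  if R is a :: R' then ((a < j) && head_sat (hrel h j) R') + dims_after j R'
  else 0.

Lemma dims_after_all_lt j R : all (fun a => a < j) R ->
  dims_after j R = count (hrel h j) (behead R) + (R != [::]).
Proof.
elim: R => [|a R IH] //= /andP [-> /IH ->].
by case: R {IH} => [|b R] //=; rewrite addnA.
Qed.

Lemma dims_after_count j R : all (fun a => a < j) R -> head_sat (hrel h j) R ->
  dims_after j R = count (hrel h j) R.
Proof.
move=> lt_Rj; rewrite dims_after_all_lt //.
by case: R lt_Rj => [|b R] //= _ ->; rewrite addn1.
Qed.

Lemma dims_after_insert i j X R : i < j -> i <= h j -> head_sat (hrel h i) R ->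
  dims_after i (X ++ j :: R) = dims_after i (X ++ R).
Proof.
move=> lt_ij le_i_hj hd_R; elim: X => [|x X IH] /=.
  by rewrite ltnNge (ltnW lt_ij).
by rewrite IH; case: X {IH} => [|y X] //=; rewrite hd_R /hrel le_i_hj.
Qed.

Lemma count_dim_pair_suffix T j Y R : T = Y ++ R -> uniq T -> j \in Y ->
  count (fun a => dim_pair h T a j) R = dims_after j R.
Proof.
elim: R Y => [|a R IH] Y // T_YR uniqT jY /=.
rewrite (IH (rcons Y a)) ?cat_rcons ?mem_rcons ?in_cons ?jY ?orbT //.
have aY : a \notin Y.
  move: uniqT; rewrite T_YR cat_uniq => /and3P [_ /hasPn -> //].
  by rewrite mem_head.
congr (_ + _); rewrite /dim_pair T_YR !mem_cat mem_head orbT jY /=.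
rewrite !index_cat jY (negbTE aY) /= eqxx addn0 index_mem jY /= size_cat /=.
rewrite nth_cat [_ < size Y]ltn_geF // subSnn.
by case: R {IH T_YR} => [|b R] /=; rewrite ?addn1 ?ltnn // !addnS !ltnS leq_addr.
Qed.

Lemma Dcard_cat T X j R : uniq T -> T = X ++ j :: R ->
  Dcard h T j = dims_after j R.
Proof.
move=> uniqT T_XjR; rewrite /Dcard [in X in count _ X]T_XjR -cat_rcons count_cat.
rewrite (@count_dim_pair_suffix T j (rcons X j) R)
  ?cat_rcons ?mem_rcons ?mem_head //.
have jX : j \notin X.
  move: uniqT; rewrite T_XjR cat_uniq => /and3P [_ /hasPn -> //].
  by rewrite mem_head.
rewrite (eq_in_count (a2 := pred0)) ?count_pred0 // => a.
rewrite mem_rcons in_cons => /predU1P [-> | aX] /=.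
  by rewrite /dim_pair ltnn /= !andbF.
rewrite /dim_pair T_XjR !index_cat aX (negbTE jX) /= eqxx addn0.
have /ltnW/leq_gtF -> : index a X < size X by rewrite index_mem.
by rewrite /= !andbF.
Qed.

End DimensionPairs.

Lemma iota1_rcons m : iota 1 m.+1 = rcons (iota 1 m) m.+1.
Proof. by rewrite -cats1 -[m.+1 in LHS]addn1 iotaD add1n. Qed.

Lemma perm_insert_max m L R :
  perm_eq (L ++ m.+1 :: R) (iota 1 m.+1) = perm_eq (L ++ R) (iota 1 m).
Proof.
rewrite iota1_rcons -cats1 perm_sym perm_catC /= perm_sym.
by rewrite -[m.+1 :: R]cat1s perm_catCA /= perm_cons.
Qed.

Lemma sorted_insert_max h j L R : all (fun x => x < j) L -> j <= h j ->
  sorted (hrel h) (L ++ j :: R) =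
  sorted (hrel h) (L ++ R) && head_sat (hrel h j) R.
Proof.
case: L => [_ | x L /= /andP [lt_xj lt_Lj]] le_j_hj.
  by case: R => [|b R] //=; rewrite andbC.
have lt_last : last x L < j.
  by have := mem_last x L; rewrite in_cons => /predU1P [-> // | /(allP lt_Lj)].
rewrite !cat_path /= {2}/hrel (leq_trans (ltnW lt_last) le_j_hj).
case: R => [|b R] /=; first by rewrite !andbT.
rewrite /hrel; case: (leqP j (h b)) => [le_j_hb | _]; last by rewrite !andbF.
by rewrite (leq_trans (ltnW lt_last) le_j_hb) !andbT.
Qed.

Lemma mem_perm_iota1 m s x : perm_eq s (iota 1 m) -> x \in s -> 0 < x <= m.
Proof. by move=> permS; rewrite (perm_mem permS) mem_iota add1n ltnS. Qed.

Lemma filling0 h S : filling 0 h S -> S = [::].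
Proof. by case/andP => /perm_size /size0nil. Qed.

Definition Dcode (h : nat -> nat) (m : nat) (S : seq nat) : seq nat :=
  map (Dcard h S) (iota 1 m).

Definition beta_pred (h : nat -> nat) (i : nat) : nat :=
  count (hrel h i) (iota 1 i.-1).

Definition in_box (h : nat -> nat) (m : nat) (a : seq nat) : bool :=
  (size a == m) && all (fun i => nth 0 a i.-1 <= beta_pred h i) (iota 1 m).

Lemma in_box_rcons h m a x :
  in_box h m.+1 (rcons a x) = in_box h m a && (x <= beta_pred h m.+1).
Proof.
rewrite /in_box size_rcons eqSS iota1_rcons all_rcons nth_rcons.
case: eqP => [size_a | _] //=; rewrite size_a ltnn eqxx andbC.
congr andb; apply/eq_in_all => i.
rewrite mem_iota add1n ltnS => /andP [lt0i le_im].
by rewrite nth_rcons size_a prednK // le_im.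
Qed.

Lemma count_filling m h S : filling m h S ->
  count (hrel h m.+1) S = beta_pred h m.+1.
Proof. by case/andP => permS _; apply: permP. Qed.

Section Fillings.

Variables (n : nat) (h : nat -> nat).
Hypothesis hess : hessenberg n h.

Lemma hessenberg_ge i : 1 <= i <= n -> i <= h i.
Proof. by case: hess => hrange _ /hrange /andP []. Qed.

Lemma filling_insert_max m L R : m < n ->
  filling m.+1 h (L ++ m.+1 :: R) =
  filling m h (L ++ R) && head_sat (hrel h m.+1) R.
Proof.
move=> lt_mn; rewrite /filling perm_insert_max.
case permLR: (perm_eq (L ++ R) (iota 1 m)) => //=.
have lt_L : all (fun x => x < m.+1) L.
  apply/allP => x xL.
  have xLR : x \in L ++ R by rewrite mem_cat xL.
  by case/andP: (mem_perm_iota1 permLR xLR).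
by rewrite sorted_insert_max ?hessenberg_ge.
Qed.

Lemma filling_split_max m S : m < n -> filling m.+1 h S ->
  exists L R, [/\ S = L ++ m.+1 :: R, filling m h (L ++ R)
                & head_sat (hrel h m.+1) R].
Proof.
move=> lt_mn fillS; have [permS _] := andP fillS.
have mS : m.+1 \in S by rewrite (perm_mem permS) mem_iota ltnS leqnn.
move: fillS; case/splitPr: mS => L R; rewrite filling_insert_max //.
by case/andP=> fillLR hdR; exists L, R.
Qed.

Lemma filling_uniq m S : filling m h S -> uniq S.
Proof. by case/andP=> permS _; rewrite (perm_uniq permS) iota_uniq. Qed.

Section InsertMax.

Variables (m : nat) (L R : seq nat).
Hypotheses (lt_mn : m < n) (fillLR : filling m h (L ++ R)).
Hypothesis hdR : head_sat (hrel h m.+1) R.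

Let permLR : perm_eq (L ++ R) (iota 1 m) := proj1 (andP fillLR).
Let le_m_hm : m.+1 <= h m.+1 := @hessenberg_ge m.+1 lt_mn.

Let fillLmR : filling m.+1 h (L ++ m.+1 :: R).
Proof. by rewrite filling_insert_max // fillLR. Qed.

Lemma Dcard_insert_max i : i \in L ++ R ->
  Dcard h (L ++ m.+1 :: R) i = Dcard h (L ++ R) i.
Proof.
move=> iLR; have uLR := filling_uniq fillLR; have uLmR := filling_uniq fillLmR.
have /andP [_ le_im] := mem_perm_iota1 permLR iLR.
move: iLR uLR uLmR; rewrite mem_cat => /orP [] /splitPr [X Y] uLR uLmR.
  rewrite -!catA /= in uLR uLmR *.
  rewrite (Dcard_cat h uLmR (erefl _)) (Dcard_cat h uLR (erefl _)).
  apply: dims_after_insert => //; first exact: leq_trans (leqW le_im) le_m_hm.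
  by move: hdR; case: (R) => //= b _ /(leq_trans (leqW le_im)).
rewrite (@Dcard_cat h _ (L ++ m.+1 :: X) _ Y uLmR) -?catA //.
by rewrite (@Dcard_cat h _ (L ++ X) _ Y uLR) -?catA.
Qed.

Lemma Dcard_max : Dcard h (L ++ m.+1 :: R) m.+1 = count (hrel h m.+1) R.
Proof.
rewrite (Dcard_cat h (filling_uniq fillLmR) (erefl _)) dims_after_count //.
apply/allP => x xR; have xLR : x \in L ++ R by rewrite mem_cat xR orbT.
by case/andP: (mem_perm_iota1 permLR xLR).
Qed.

Lemma Dcode_insert_max :
  Dcode h m.+1 (L ++ m.+1 :: R) =
  rcons (Dcode h m (L ++ R)) (count (hrel h m.+1) R).
Proof.
rewrite /Dcode iota1_rcons map_rcons Dcard_max; congr rcons.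
by apply/eq_in_map => i; rewrite -(perm_mem permLR); apply: Dcard_insert_max.
Qed.

End InsertMax.

Lemma Dcode_in_box m S : m <= n -> filling m h S -> in_box h m (Dcode h m S).
Proof.
elim: m S => [|m IH] S le_mn fillS; first by rewrite /in_box /Dcode.
have [L [R [-> fillLR hdR]]] := filling_split_max le_mn fillS.
rewrite Dcode_insert_max // in_box_rcons IH ?(ltnW le_mn) //=.
by rewrite -(count_filling fillLR) count_cat leq_addl.
Qed.

Lemma Dcode_inj m S1 S2 : m <= n -> filling m h S1 -> filling m h S2 ->
  Dcode h m S1 = Dcode h m S2 -> S1 = S2.
Proof.
elim: m S1 S2 => [|m IH] S1 S2 le_mn; first by move=> /filling0 -> /filling0 ->.
move=> /(filling_split_max le_mn) [L1 [R1 [-> fill1 hd1]]].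
move=> /(filling_split_max le_mn) [L2 [R2 [-> fill2 hd2]]].
rewrite !Dcode_insert_max // => /eqP.
rewrite eqseq_rcons => /andP [/eqP E /eqP C].
by have [-> ->] := split_count_inj (IH _ _ (ltnW le_mn) fill1 fill2 E) hd1 hd2 C.
Qed.

Lemma Dcode_surj m a : m <= n -> in_box h m a ->
  exists2 S, filling m h S & Dcode h m S = a.
Proof.
elim: m a => [|m IH] a le_mn.
  by case/andP => /eqP /size0nil ->; exists [::].
case/lastP: a => [|a x]; first by case/andP.
rewrite in_box_rcons => /andP [box_a le_x].
have [S fillS DS] := IH a (ltnW le_mn) box_a.
rewrite -(count_filling fillS) in le_x.
have [L [R [S_LR hdR cntR]]] := split_count_exists le_x.
rewrite S_LR in fillS DS; exists (L ++ m.+1 :: R).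
  by rewrite filling_insert_max // fillS.
by rewrite Dcode_insert_max // DS cntR.
Qed.

Lemma beta_predE i : 1 <= i <= n -> beta n h i = (beta_pred h i).+1.
Proof.
case/andP=> lt0i le_in; have le_pin : i.-1 <= n by lia.
rewrite /beta -(subnKC le_pin) iotaD count_cat add1n prednK //.
have -> : count (fun k => h k < i) (iota i (n - i.-1)) = 0.
  apply/eqP; rewrite -leqn0 leqNgt -has_count; apply/hasPn => k.
  rewrite mem_iota => /andP [le_ik lt_k]; have le_kn : k <= n by lia.
  by rewrite -leqNgt (leq_trans le_ik) // hessenberg_ge // (leq_trans lt0i le_ik).
have := count_predC (hrel h i) (iota 1 i.-1); rewrite size_iota.
rewrite (@eq_count _ (predC (hrel h i)) (fun k => h k < i)) => [|k]; last first.
  by rewrite /= /hrel ltnNge.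
rewrite -/(beta_pred h i); lia.
Qed.

Lemma in_BhE a : in_Bh n h a = in_box h n a.
Proof.
congr andb; apply/eq_in_all => i; rewrite mem_iota add1n ltnS => le_in.
by rewrite beta_predE // ltnS.
Qed.

End Fillings.

Lemma Phi_Dcode n h T : filling n h T -> Phi n h T = Dcode h n T.
Proof.
case/andP=> permT _; apply/eq_in_map => j _; case: eqP => // ->.
rewrite /Dcard (eq_in_count (a2 := pred0)) ?count_pred0 // => a aT.
have /andP [lt0a _] := mem_perm_iota1 permT aT.
by rewrite /dim_pair ltnNge lt0a /= !andbF.
Qed.

Lemma sumn_Phi n h T : filling n h T -> sumn (Phi n h T) = num_dim_pairs h T.
Proof.
move=> fillT; rewrite Phi_Dcode // /num_dim_pairs; case/andP: fillT => permT _.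
by apply/perm_sumn/perm_map; rewrite perm_sym.
Qed.

Theorem mainTheorem19 (n : nat) (h : nat -> nat) :
  hessenberg n h ->
  (forall T1 T2, filling n h T1 -> filling n h T2 ->
     Phi n h T1 = Phi n h T2 -> T1 = T2) /\
  (forall T, filling n h T -> in_Bh n h (Phi n h T)) /\
  (forall a, in_Bh n h a -> exists2 T, filling n h T & Phi n h T = a) /\
  (forall T, filling n h T -> sumn (Phi n h T) = num_dim_pairs h T).
Proof.
move=> hess; split; [|split; [|split]].
- move=> T1 T2 fill1 fill2; rewrite !Phi_Dcode //.
  exact: (Dcode_inj hess (leqnn n)).
- by move=> T fillT; rewrite Phi_Dcode // (in_BhE hess) (Dcode_in_box hess).
- move=> a; rewrite in_BhE // => /(Dcode_surj hess (leqnn n)) [T fillT DT].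
  by exists T; rewrite // Phi_Dcode.
- exact: sumn_Phi.
Qed.
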